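(* For every integer $n\ge3$, $$\int_{1+\frac1n}^{1+\frac{(\log n)^2}{n}}F_n(w)\,dw\le 2n\log\log n.$$
   Context: For $w>0$ and integer $n\ge1$ let $a_n(w)=\sum_{j=0}^n w^j$, $b_n(w)=\sum_{j=1}^n jw^j$, $c_n(w)=\sum_{j=0}^n j^2w^j$, and $$F_n(w)=\frac{1}{2\sqrt{w}}\sqrt{\frac{c_n(w)}{a_n(w)}}\sqrt{\frac{a_n(w)c_n(w)-b_n(w)^2}{w\,a_n(w)^2}}.$$ $\log$ is the natural logarithm. *)

From Stdlib Require Import Reals.
From Coquelicot Require Import Coquelicot.
Open Scope R_scope.

Definition a_n (n : nat) (w : R) : R := sum_f_R0 (fun j => w ^ j) n.
Definition b_n (n : nat) (w : R) : R := sum_f_R0 (fun j => INR j * w ^ j) n.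
Definition c_n (n : nat) (w : R) : R := sum_f_R0 (fun j => (INR j)^2 * w ^ j) n.

Definition F_n (n : nat) (w : R) : R :=
  / (2 * sqrt w) * sqrt (c_n n w / a_n n w)
  * sqrt ((a_n n w * c_n n w - (b_n n w)^2) / (w * (a_n n w)^2)).

(* Read the weights w^j (0 <= j <= n) as an unnormalised distribution on
   {0,..,n}: a_n is its mass, b_n/a_n its mean and (a_n c_n - b_n^2)/a_n^2 its
   variance.  The proof is a pointwise bound followed by an explicit integral.
   1. Multiplying by (w - 1) telescopes a_n, b_n, c_n into closed forms; from
      them the first two moments about the top point n,
      M1 = n a_n - b_n and M2 = n^2 a_n - 2 n b_n + c_n, satisfy
      (w-1) M1 = a_n - 1 - n and (w-1)^2 M2 <= (w+1) a_n for w > 1.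
   2. Since the variance does not depend on the centre, a_n c_n - b_n^2 =
      a_n M2 - M1^2, whence (w-1)^2 (a_n c_n - b_n^2) <= (w+1) a_n^2.
   3. Together with c_n <= n^2 a_n and sqrt w >= 1 this gives, for w > 1,
      F_n(w) <= n / (w - 1).
   4. F_n is continuous on (1, oo), hence integrable, and the integral of
      n/(w-1) over [1 + 1/n, 1 + L^2/n] is n log (L^2) = 2 n log L.  *)

From Stdlib Require Import Reals Lra Psatz.
From Coquelicot Require Import Coquelicot.
Open Scope R_scope.

Lemma a_n_closed_form n w : (w - 1) * a_n n w = w ^ S n - 1.
Proof.
  induction n as [|n IH]; unfold a_n in *.
  - simpl; ring.
  - rewrite tech5, Rmult_plus_distr_l, IH; simpl; ring.
Qed.

Lemma b_n_closed_form n w :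
  (w - 1) * b_n n w = INR n * w ^ S n - (a_n n w - 1).
Proof.
  induction n as [|n IH]; unfold a_n, b_n in *.
  - simpl; ring.
  - rewrite !tech5, Rmult_plus_distr_l, IH, S_INR; simpl; ring.
Qed.

Lemma c_n_closed_form n w :
  (w - 1) * c_n n w = INR n ^ 2 * w ^ S n - 2 * b_n n w + (a_n n w - 1).
Proof.
  induction n as [|n IH]; unfold a_n, b_n, c_n in *.
  - simpl; ring.
  - rewrite !tech5, Rmult_plus_distr_l, IH, S_INR; simpl; ring.
Qed.

Lemma a_n_ge_1 n w : 0 <= w -> 1 <= a_n n w.
Proof.
  intros Hw; induction n as [|n IH]; unfold a_n in *.
  - simpl; lra.
  - rewrite tech5; pose proof (pow_le w (S n) Hw); lra.
Qed.

Lemma c_n_le n w : 0 <= w -> c_n n w <= INR n ^ 2 * a_n n w.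
Proof.
  intros Hw; unfold c_n, a_n; rewrite scal_sum; apply sum_Rle.
  intros j Hj; rewrite (Rmult_comm (w ^ j)).
  apply Rmult_le_compat_r; [now apply pow_le |].
  apply pow_incr; split; [apply pos_INR | now apply le_INR].
Qed.

Lemma first_moment_about_top n w :
  (w - 1) * (INR n * a_n n w - b_n n w) = a_n n w - 1 - INR n.
Proof.
  replace ((w - 1) * (INR n * a_n n w - b_n n w))
    with (INR n * ((w - 1) * a_n n w) - (w - 1) * b_n n w) by ring.
  rewrite a_n_closed_form, b_n_closed_form; ring.
Qed.

Lemma second_moment_about_top n w :
  (w - 1) * (INR n ^ 2 * a_n n w - 2 * INR n * b_n n w + c_n n w)
  = 2 * (INR n * a_n n w - b_n n w) + a_n n w - (INR n + 1) ^ 2.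
Proof.
  replace ((w - 1) * (INR n ^ 2 * a_n n w - 2 * INR n * b_n n w + c_n n w))
    with (INR n ^ 2 * ((w - 1) * a_n n w) - 2 * INR n * ((w - 1) * b_n n w)
          + (w - 1) * c_n n w) by ring.
  rewrite a_n_closed_form, b_n_closed_form, c_n_closed_form; ring.
Qed.

Lemma second_moment_about_top_bound n w : 1 < w ->
  (w - 1) ^ 2 * (INR n ^ 2 * a_n n w - 2 * INR n * b_n n w + c_n n w)
  <= (w + 1) * a_n n w.
Proof.
  intros Hw.
  pose proof (first_moment_about_top n w) as M1.
  pose proof (second_moment_about_top n w) as M2.
  pose proof (pos_INR n).
  assert (0 <= (w - 1) * (INR n + 1) ^ 2) by (apply Rmult_le_pos; nra).
  replace ((w - 1) ^ 2 * (INR n ^ 2 * a_n n w - 2 * INR n * b_n n w + c_n n w))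
    with ((w - 1) * ((w - 1) * (INR n ^ 2 * a_n n w - 2 * INR n * b_n n w
                                 + c_n n w))) by ring.
  rewrite M2.
  replace ((w - 1) * (2 * (INR n * a_n n w - b_n n w) + a_n n w - (INR n + 1) ^ 2))
    with (2 * ((w - 1) * (INR n * a_n n w - b_n n w))
          + (w - 1) * (a_n n w - (INR n + 1) ^ 2)) by ring.
  rewrite M1; nra.
Qed.

Lemma variance_bound n w : 1 < w ->
  (w - 1) ^ 2 * (a_n n w * c_n n w - b_n n w ^ 2) <= (w + 1) * a_n n w ^ 2.
Proof.
  intros Hw.
  set (N := INR n); set (A := a_n n w); set (B := b_n n w); set (C := c_n n w).
  assert (HA : 1 <= A) by (apply a_n_ge_1; lra).
  assert (HM2 : (w - 1) ^ 2 * (N ^ 2 * A - 2 * N * B + C) <= (w + 1) * A)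
    by now apply second_moment_about_top_bound.
  (* the variance is the same about 0 and about n *)
  assert (Shift : A * C - B ^ 2 = A * (N ^ 2 * A - 2 * N * B + C) - (N * A - B) ^ 2)
    by ring.
  rewrite Shift.
  assert (0 <= ((w - 1) * (N * A - B)) ^ 2) by apply pow2_ge_0.
  assert (A * ((w - 1) ^ 2 * (N ^ 2 * A - 2 * N * B + C)) <= A * ((w + 1) * A))
    by (apply Rmult_le_compat_l; lra).
  nra.
Qed.

Lemma F_n_le n w : 1 < w -> F_n n w <= INR n / (w - 1).
Proof.
  intros Hw; unfold F_n.
  pose proof (variance_bound n w Hw) as Var.
  set (N := INR n) in *; set (A := a_n n w) in *;
  set (B := b_n n w) in *; set (C := c_n n w) in *.
  assert (HA : 1 <= A) by (apply a_n_ge_1; lra).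
  assert (HN : 0 <= N) by apply pos_INR.
  assert (HC : C <= N ^ 2 * A) by (apply c_n_le; lra).
  assert (Mean : sqrt (C / A) <= N).
  { rewrite <- (sqrt_pow2 N HN); apply sqrt_le_1_alt.
    apply Rle_div_l; lra. }
  assert (Spread : sqrt ((A * C - B ^ 2) / (w * A ^ 2)) <= 2 / (w - 1)).
  { assert (P : 0 <= 2 / (w - 1)) by (apply Rlt_le, Rdiv_lt_0_compat; lra).
    rewrite <- (sqrt_pow2 _ P); apply sqrt_le_1_alt.
    apply Rle_div_l; [nra |].
    replace ((2 / (w - 1)) ^ 2 * (w * A ^ 2)) with (4 * w * A ^ 2 / (w - 1) ^ 2)
      by (field; lra).
    apply Rle_div_r; nra. }
  assert (Sw : 1 <= sqrt w) by (rewrite <- sqrt_1; apply sqrt_le_1_alt; lra).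
  assert (I1 : 0 <= / (2 * sqrt w)) by (apply Rlt_le, Rinv_0_lt_compat; lra).
  assert (I2 : / (2 * sqrt w) <= / 2) by (apply Rinv_le_contravar; lra).
  apply Rle_trans with (/ 2 * N * (2 / (w - 1))); [| right; field; lra].
  apply Rmult_le_compat; try apply sqrt_pos; auto.
  - apply Rmult_le_pos; auto using sqrt_pos.
  - apply Rmult_le_compat; auto using sqrt_pos.
Qed.

Lemma power_sum_derivable (k : nat -> R) n x :
  ex_derive (fun w => sum_f_R0 (fun j => k j * w ^ j) n) x.
Proof.
  induction n as [|n IH]; simpl.
  - auto_derive; auto.
  - apply (ex_derive_plus (fun w => sum_f_R0 (fun j => k j * w ^ j) n)); auto.
    auto_derive; auto.
Qed.

Lemma a_n_derivable n x : ex_derive (a_n n) x.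
Proof.
  apply (ex_derive_ext (fun w => sum_f_R0 (fun j => 1 * w ^ j) n)).
  - intros w; unfold a_n; apply sum_eq; intros; ring.
  - apply power_sum_derivable.
Qed.

Lemma b_n_derivable n x : ex_derive (b_n n) x.
Proof. apply (power_sum_derivable (fun j => INR j)). Qed.

Lemma c_n_derivable n x : ex_derive (c_n n) x.
Proof. apply (power_sum_derivable (fun j => INR j ^ 2)). Qed.

Lemma continuous_Rmult (f g : R -> R) x :
  continuous f x -> continuous g x -> continuous (fun y => f y * g y) x.
Proof. apply (continuous_mult (K := R_AbsRing)). Qed.

(* F_n is continuous on (1, oo): the arguments of the square roots are
   differentiable there, their denominators being positive. *)
Lemma F_n_continuous n x : 1 < x -> continuous (F_n n) x.
Proof.
  intros Hx; unfold F_n.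
  assert (HA : 1 <= a_n n x) by (apply a_n_ge_1; lra).
  assert (Ha := a_n_derivable n x); assert (Hb := b_n_derivable n x);
  assert (Hc := c_n_derivable n x).
  repeat apply continuous_Rmult.
  - apply (continuous_Rinv_comp (fun y => 2 * sqrt y)); [| pose proof (sqrt_lt_R0 x); lra].
    apply continuous_Rmult; [apply continuous_const | apply continuous_sqrt].
  - apply (continuous_sqrt_comp (fun y => c_n n y / a_n n y)).
    apply (ex_derive_continuous (K := R_AbsRing) (V := R_NormedModule)).
    auto_derive; repeat split; auto; lra.
  - apply (continuous_sqrt_comp
             (fun y => (a_n n y * c_n n y - b_n n y ^ 2) / (y * a_n n y ^ 2))).
    apply (ex_derive_continuous (K := R_AbsRing) (V := R_NormedModule)).
    auto_derive; repeat split; auto; nra.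
Qed.

Lemma is_RInt_shifted_inverse (N p q : R) : 0 < p -> 0 < q ->
  is_RInt (fun w => N / (w - 1)) (1 + p) (1 + q) (N * ln q - N * ln p).
Proof.
  intros Hp Hq.
  replace (N * ln q - N * ln p)
    with (minus (N * ln ((1 + q) - 1)) (N * ln ((1 + p) - 1)))
    by (unfold minus, plus, opp; simpl; ring_simplify (1 + q - 1) (1 + p - 1); ring).
  apply (is_RInt_derive (fun w => N * ln (w - 1))); intros x Hx;
    assert (1 < x) by (pose proof (Rmin_glb_lt (1 + p) (1 + q) 1);
                       destruct Hx; lra).
  - auto_derive; [lra | field; lra].
  - apply (ex_derive_continuous (K := R_AbsRing) (V := R_NormedModule)).
    auto_derive; lra.
Qed.

Theorem lemma3p5 : forall n : nat, (3 <= n)%nat ->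
  RInt (F_n n) (1 + 1 / INR n) (1 + (ln (INR n))^2 / INR n)
  <= 2 * INR n * ln (ln (INR n)).
Proof.
  intros n Hn.
  assert (N3 : 3 <= INR n) by (replace 3 with (INR 3) by (simpl; ring); now apply le_INR).
  set (N := INR n) in *.
  assert (L1 : 1 <= ln N).
  { rewrite <- (ln_exp 1); apply ln_le; [apply exp_pos | pose proof exp_le_3; lra]. }
  set (L := ln N) in *.
  assert (Hp : 0 < 1 / N) by (apply Rdiv_lt_0_compat; lra).
  assert (Hq : 0 < L ^ 2 / N) by (apply Rdiv_lt_0_compat; nra).
  assert (Hpq : 1 / N <= L ^ 2 / N)
    by (unfold Rdiv; apply Rmult_le_compat_r; [apply Rlt_le, Rinv_0_lt_compat |]; nra).
  pose proof (is_RInt_shifted_inverse N _ _ Hp Hq) as Cmp.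
  apply Rle_trans with (RInt (fun w => N / (w - 1)) (1 + 1 / N) (1 + L ^ 2 / N)).
  - apply RInt_le; [lra | | eexists; exact Cmp | intros w Hw; apply F_n_le; lra].
    apply (@ex_RInt_continuous R_CompleteNormedModule); intros w Hw.
    rewrite Rmin_left, Rmax_right in Hw by lra.
    apply F_n_continuous; lra.
  - rewrite (is_RInt_unique _ _ _ _ Cmp).
    rewrite !ln_div, ln_pow, ln_1 by nra; right; simpl; ring.
Qed.
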